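(* Let $n\ge1$ and $a_1,\dots,a_n,b_1,\dots,b_n>0$. Put $S_a=\sum_{j=1}^n a_j^2$, $S_b=\sum_{j=1}^n b_j^2$, $$A=\frac{1}{8}\sqrt{S_aS_b}\cdot \sum_{i=1}^n \left(\frac{a_i^2}{S_a}-\frac{b_i^2}{S_b}\right)^2,$$ $$m=\min_{1\le i\le n}\min\left\{\frac{a_i^2}{S_a},\frac{b_i^2}{S_b}\right\},\qquad M=\max_{1\le i\le n}\max\left\{\frac{a_i^2}{S_a},\frac{b_i^2}{S_b}\right\}.$$ Then $$\frac{A^2}{M^2}+\frac{2A}{M}\sum_{i=1}^n a_ib_i\leq S_aS_b-\left(\sum_{i=1}^n a_ib_i\right)^2\leq \frac{A^2}{m^2}+\frac{2A}{m}\sum_{i=1}^n a_i b_i .$$ *)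

(* the statement is purely algebraic (uses only sqrt), so we
   state it over an arbitrary real closed field R (rcfType). *)
From HB Require Import structures.
From mathcomp Require Import all_boot all_order all_algebra.
Set Implicit Arguments. Unset Strict Implicit. Unset Printing Implicit Defensive.
Import Order.TTheory GRing.Theory Num.Theory.
Local Open Scope ring_scope.

Section Defs.
Variable R : rcfType.
Variable N : nat. (* vectors indexed by 'I_N.+1, i.e. n = N+1 >= 1 entries *)
Implicit Types a b : 'I_N.+1 -> R.

Definition sumsq a : R := \sum_(j < N.+1) a j ^+ 2.
Definition dotp a b : R := \sum_(i < N.+1) a i * b i.

Definition Aconst a b : R :=
  (8%:R)^-1 * Num.sqrt (sumsq a * sumsq b) *
  \sum_(i < N.+1) (a i ^+ 2 / sumsq a - b i ^+ 2 / sumsq b) ^+ 2.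

(* min over i of min(a_i^2/S_a, b_i^2/S_b); the fold is seeded with the
   i = 0 term, so it is the genuine minimum over the nonempty index set. *)
Definition mconst a b : R :=
  \big[Num.min/Num.min (a ord0 ^+ 2 / sumsq a) (b ord0 ^+ 2 / sumsq b)]_(i < N.+1)
     Num.min (a i ^+ 2 / sumsq a) (b i ^+ 2 / sumsq b).

Definition Mconst a b : R :=
  \big[Num.max/Num.max (a ord0 ^+ 2 / sumsq a) (b ord0 ^+ 2 / sumsq b)]_(i < N.+1)
     Num.max (a i ^+ 2 / sumsq a) (b i ^+ 2 / sumsq b).
End Defs.

From HB Require Import structures.
From mathcomp Require Import all_boot all_order all_algebra.
From mathcomp Require Import ring lra.
Import Order.TTheory GRing.Theory Num.Theory.
Set Implicit Arguments. Unset Strict Implicit. Unset Printing Implicit Defensive.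
Local Open Scope ring_scope.

(** Normalize to unit vectors x_i = a_i/√S_a and y_i = b_i/√S_b, so that
  a_i^2/S_a = x_i^2, b_i^2/S_b = y_i^2 and Σ (x_i - y_i)^2 = 2 (1 - Σ x_i y_i).
  Since x_i^2 - y_i^2 = (x_i - y_i)(x_i + y_i) and 4m <= (x_i + y_i)^2 <= 4M,
  writing s = √(S_a S_b) and P = Σ a_i b_i we get m (s - P) <= A <= M (s - P),
  i.e. A/M <= s - P <= A/m.  The theorem follows because
  S_a S_b - P^2 = (s - P)^2 + 2 (s - P) P is increasing in s - P >= 0. *)

Section RealInequalities.
Variable R : realDomainType.
Implicit Types m M P t u x y : R.

Lemma sqrD_le_max x y M : Num.max (x ^+ 2) (y ^+ 2) <= M -> (x + y) ^+ 2 <= M *+ 4.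
Proof. by rewrite ge_max => /andP[xM yM]; nra. Qed.

Lemma sqrD_ge_min x y m : 0 <= x -> 0 <= y ->
  m <= Num.min (x ^+ 2) (y ^+ 2) -> m *+ 4 <= (x + y) ^+ 2.
Proof. by rewrite le_min => x0 y0 /andP[mx my]; case: (leP x y) => xy; nra. Qed.

Lemma ler_sqr_add_mul2r P t u : 0 <= P -> 0 <= t -> t <= u ->
  t ^+ 2 + 2%:R * t * P <= u ^+ 2 + 2%:R * u * P.
Proof.
move=> P0 t0 tu; have u0 := le_trans t0 tu.
by rewrite lerD ?ler_sqr // ler_wpM2r // ler_wpM2l.
Qed.

End RealInequalities.

Lemma sqr_gap_bounds (R : realFieldType) (m M A P s : R) :
  0 < m -> 0 < M -> 0 <= A -> 0 <= P -> m * (s - P) <= A -> A <= M * (s - P) ->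
  A ^+ 2 / M ^+ 2 + 2%:R * A / M * P <= s ^+ 2 - P ^+ 2 /\
  s ^+ 2 - P ^+ 2 <= A ^+ 2 / m ^+ 2 + 2%:R * A / m * P.
Proof.
move=> m0 M0 A0 P0 mA AM.
have gap0 : 0 <= s - P by rewrite -(pmulr_rge0 _ M0) (le_trans A0).
have -> : s ^+ 2 - P ^+ 2 = (s - P) ^+ 2 + 2%:R * (s - P) * P by ring.
rewrite -!expr_div_n -!(mulrA 2%:R A).
split; apply: ler_sqr_add_mul2r => //.
- by rewrite divr_ge0 // ltW.
- by rewrite ler_pdivrMr // mulrC.
- by rewrite ler_pdivlMr // mulrC.
Qed.

Section UnitVectors.
Variables (R : realDomainType) (I : finType) (x y : I -> R).
Hypotheses (x_unit : \sum_i x i ^+ 2 = 1) (y_unit : \sum_i y i ^+ 2 = 1).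

Lemma sum_sqr_subr : \sum_i (x i - y i) ^+ 2 = (1 - \sum_i x i * y i) *+ 2.
Proof.
under eq_bigr => i _ do rewrite sqrrB.
by rewrite big_split sumrB sumrMnl /= x_unit y_unit mulrnBl mulr2n addrAC.
Qed.

Lemma sum_sqr_subr_sqr_le M : (forall i, Num.max (x i ^+ 2) (y i ^+ 2) <= M) ->
  \sum_i (x i ^+ 2 - y i ^+ 2) ^+ 2 <= M * (1 - \sum_i x i * y i) *+ 8.
Proof.
move=> xyM; have -> : M * (1 - \sum_i x i * y i) *+ 8 =
    (1 - \sum_i x i * y i) *+ 2 * (M *+ 4) by ring.
rewrite -sum_sqr_subr mulr_suml; apply: ler_sum => i _.
by rewrite subr_sqr exprMn ler_wpM2l ?sqr_ge0 ?sqrD_le_max.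
Qed.

Lemma sum_sqr_subr_sqr_ge m : (forall i, 0 <= x i) -> (forall i, 0 <= y i) ->
  (forall i, m <= Num.min (x i ^+ 2) (y i ^+ 2)) ->
  m * (1 - \sum_i x i * y i) *+ 8 <= \sum_i (x i ^+ 2 - y i ^+ 2) ^+ 2.
Proof.
move=> x0 y0 mxy; have -> : m * (1 - \sum_i x i * y i) *+ 8 =
    (1 - \sum_i x i * y i) *+ 2 * (m *+ 4) by ring.
rewrite -sum_sqr_subr mulr_suml; apply: ler_sum => i _.
by rewrite subr_sqr exprMn ler_wpM2l ?sqr_ge0 ?sqrD_ge_min.
Qed.

End UnitVectors.

Section Normalization.
Variables (R : rcfType) (N : nat).
Implicit Types a b : 'I_N.+1 -> R.

Definition normalized a i := a i / Num.sqrt (sumsq a).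

Lemma sumsq_ge0 a : 0 <= sumsq a.
Proof. by apply: sumr_ge0 => i _; apply: sqr_ge0. Qed.

Lemma sumsq_gt0 a : (forall i, 0 < a i) -> 0 < sumsq a.
Proof.
move=> a0; rewrite /sumsq (bigD1 ord0) //= ltr_wpDr ?exprn_gt0 //.
by apply: sumr_ge0 => i _; apply: sqr_ge0.
Qed.

Lemma dotp_ge0 a b : (forall i, 0 <= a i) -> (forall i, 0 <= b i) -> 0 <= dotp a b.
Proof. by move=> a0 b0; apply: sumr_ge0 => i _; apply: mulr_ge0. Qed.

Lemma normalized_ge0 a i : 0 <= a i -> 0 <= normalized a i.
Proof. by move=> a0; rewrite divr_ge0 ?sqrtr_ge0. Qed.

Lemma sqr_normalized a i : normalized a i ^+ 2 = a i ^+ 2 / sumsq a.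
Proof. by rewrite expr_div_n sqr_sqrtr ?sumsq_ge0. Qed.

Lemma sumsq_normalized a : 0 < sumsq a -> sumsq (normalized a) = 1.
Proof.
move=> Sa0; rewrite {1}/sumsq; under eq_bigr => i _ do rewrite sqr_normalized.
by rewrite -mulr_suml divff ?gt_eqF.
Qed.

Lemma dotp_normalized a b : 0 < sumsq a -> 0 < sumsq b ->
  dotp a b = Num.sqrt (sumsq a * sumsq b) * dotp (normalized a) (normalized b).
Proof.
move=> Sa0 Sb0; rewrite sqrtrM ?sumsq_ge0 // /dotp mulr_sumr.
by apply: eq_bigr => i _; rewrite /normalized; field; rewrite !sqrtr_eq0 -!ltNge Sa0 Sb0.
Qed.

Lemma Aconst_normalized a b : Aconst a b = 8%:R^-1 * Num.sqrt (sumsq a * sumsq b) *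
  \sum_i (normalized a i ^+ 2 - normalized b i ^+ 2) ^+ 2.
Proof. by congr (_ * _); apply: eq_bigr => i _; rewrite !sqr_normalized. Qed.

Lemma Aconst_ge0 a b : 0 <= Aconst a b.
Proof.
rewrite /Aconst !mulr_ge0 ?invr_ge0 ?ler0n ?sqrtr_ge0 //.
by apply: sumr_ge0 => i _; apply: sqr_ge0.
Qed.

Lemma mconst_le a b i :
  mconst a b <= Num.min (normalized a i ^+ 2) (normalized b i ^+ 2).
Proof. by rewrite !sqr_normalized; apply: bigmin_le. Qed.

Lemma le_Mconst a b i :
  Num.max (normalized a i ^+ 2) (normalized b i ^+ 2) <= Mconst a b.
Proof. by rewrite !sqr_normalized; apply: le_bigmax. Qed.

Lemma mconst_gt0 a b : (forall i, 0 < a i) -> (forall i, 0 < b i) -> 0 < mconst a b.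
Proof.
move=> a0 b0; have pos i : 0 < Num.min (a i ^+ 2 / sumsq a) (b i ^+ 2 / sumsq b).
  by rewrite lt_min !divr_gt0 ?exprn_gt0 ?sumsq_gt0.
exact: lt_bigmin.
Qed.

Lemma Mconst_gt0 a b : (forall i, 0 < a i) -> (forall i, 0 < b i) -> 0 < Mconst a b.
Proof.
move=> a0 b0; apply: lt_le_trans (le_Mconst a b ord0).
by rewrite lt_max !exprn_gt0 ?divr_gt0 ?sqrtr_gt0 ?sumsq_gt0.
Qed.

End Normalization.

Theorem mainTheorem4 (R : rcfType) (N : nat) (a b : 'I_N.+1 -> R)
  (ha : forall i, 0 < a i) (hb : forall i, 0 < b i) :
  let Sa := sumsq a in let Sb := sumsq b in
  let A := Aconst a b in let m := mconst a b in let M := Mconst a b in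
  let P := dotp a b in
  A ^+ 2 / M ^+ 2 + 2%:R * A / M * P <= Sa * Sb - P ^+ 2 /\
  Sa * Sb - P ^+ 2 <= A ^+ 2 / m ^+ 2 + 2%:R * A / m * P.
Proof.
move=> Sa Sb A m M P.
have [Sa0 Sb0] : 0 < Sa /\ 0 < Sb by rewrite !sumsq_gt0.
set x := normalized a; set y := normalized b.
set s : R := Num.sqrt (Sa * Sb); set c := dotp x y.
have scale t : t * (s - P) = 8%:R^-1 * s * (t * (1 - c) *+ 8).
  by rewrite /P (dotp_normalized Sa0 Sb0) -/s -/c; field.
have s0 : 0 <= 8%:R^-1 * s by rewrite mulr_ge0 ?invr_ge0 ?ler0n ?sqrtr_ge0.
have [x_unit y_unit] := (sumsq_normalized Sa0, sumsq_normalized Sb0).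
have -> : Sa * Sb = s ^+ 2 by rewrite sqr_sqrtr // mulr_ge0 ?ltW.
apply: sqr_gap_bounds; rewrite ?mconst_gt0 ?Mconst_gt0 ?Aconst_ge0 //.
- by apply: dotp_ge0 => i; apply: ltW.
- rewrite scale /A Aconst_normalized ler_wpM2l //.
  apply: sum_sqr_subr_sqr_ge => // i; last exact: mconst_le.
    exact/normalized_ge0/ltW.
  exact/normalized_ge0/ltW.
- rewrite scale /A Aconst_normalized ler_wpM2l //.
  by apply: sum_sqr_subr_sqr_le => // i; apply: le_Mconst.
Qed.
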